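(* Let $H$ be either $\mathrm{Sym}(m)$ acting on the set $\Delta$ of $k$-element subsets of $\{1,\ldots,m\}$, where $m\ge 5$ and $1\le k<m/2$, or $\mathrm{P\Gamma L}_d(q)$ acting on the set $\Delta$ of points (one-dimensional subspaces) of the projective space $\mathrm{PG}_{d-1}(q)$, where $d\ge 2$ and $q\ge 4$ is a prime power; let $r=|\Delta|$. Let $\ell\ge 1$ and let $G=H\wr \mathrm{Sym}(\ell)$ act in product action on $\Omega=\Delta^\ell$. Suppose that $G$ contains a permutation $g=y\sigma$ having at most four cycles on $\Omega$, where $y\in H^\ell$ (the base group), $\sigma\in\mathrm{Sym}(\ell)$, and $\sigma\neq 1$. Then $\sigma$ is a transposition, and either $r\in\{5,6,7,8\}$ and $\ell=2$, or $r\in\{5,8\}$ and $\ell=3$.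
   Context: Elements of $G=H\wr\mathrm{Sym}(\ell)$ are written $(h_1,\ldots,h_\ell)\sigma$ with $h_i\in H$ and $\sigma\in\mathrm{Sym}(\ell)$; in the product action, $H^\ell$ acts coordinatewise on $\Delta^\ell$ and $\mathrm{Sym}(\ell)$ permutes the coordinates. The number of cycles of a permutation is the number of orbits of the cyclic group it generates, fixed points included. *)

From HB Require Import structures.
From mathcomp Require Import all_boot all_order all_algebra all_fingroup.
Set Implicit Arguments. Unset Strict Implicit. Unset Printing Implicit Defensive.
Import GRing.Theory.
Local Open Scope ring_scope.

(* The element (h_1,...,h_l) sigma acts (on the right, as in the paper) by
   omega^{y sigma} = (omega^y)^sigma, i.e. coordinate i of omega is first moved
   by h_i and then placed in coordinate i^sigma:
   (omega^{y sigma})_j = (omega_{j sigma^-1})^{h_{j sigma^-1}}. *)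
Definition wr_fun (D : finType) (l : nat) (y : 'I_l -> {perm D}) (s : {perm 'I_l})
  (w : {ffun 'I_l -> D}) : {ffun 'I_l -> D} :=
  [ffun j => y ((s^-1)%g j) (w ((s^-1)%g j))].

Lemma wr_fun_inj (D : finType) (l : nat) (y : 'I_l -> {perm D}) (s : {perm 'I_l}) :
  injective (wr_fun y s).
Proof.
move=> w1 w2 E; apply/ffunP => i.
have := congr1 (fun f : {ffun 'I_l -> D} => f (s i)) E; rewrite /wr_fun !ffunE.
by rewrite -permM mulgV perm1 => /perm_inj.
Qed.

Definition wr_perm (D : finType) (l : nat) (y : 'I_l -> {perm D}) (s : {perm 'I_l})
  : {perm {ffun 'I_l -> D}} := perm (@wr_fun_inj D l y s).

Definition ncycles (T : finType) (g : {perm T}) : nat := #|porbits g|.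

Definition ksub (m k : nat) := {A : {set 'I_m} | #|A| == k}.

Definition in_Sym_ksub (m k : nat) (p : {perm ksub m k}) : Prop :=
  exists s : {perm 'I_m}, forall A : ksub m k, val (p A) = (s @: val A)%g.

Definition proj_points (F : finFieldType) (d : nat) :=
  {S : {set 'rV[F]_d} | [exists v : 'rV[F]_d, (v != 0) && (S == [set a *: v | a : F])]}.

Definition in_PGammaL (F : finFieldType) (d : nat) (p : {perm proj_points F d}) : Prop :=
  exists (A : 'M[F]_d) (tau : {rmorphism F -> F}),
    A \in unitmx /\ bijective tau /\
    forall S : proj_points F d, val (p S) = [set map_mx tau v *m A | v in val S].

Definition prop5p2_concl (r l : nat) (s : {perm 'I_l}) : Prop :=
  (exists i j : 'I_l, i != j /\ s = tperm i j) /\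
  ((r \in [:: 5; 6; 7; 8]%N /\ l = 2%N) \/ (r \in [:: 5; 8]%N /\ l = 3%N)).

(* Write g = y sigma.  Along a cycle of sigma of length L, g is semiconjugate
   (coordinates untwisted by partial products of the y i) to a twisted cyclic
   shift of Delta^L, and a semiconjugacy can only decrease the number of cycles;
   for L >= 3 and |Delta| >= 5 that shift has at least five cycles, so sigma is
   an involution.  On a 2-cycle of sigma, g becomes (a, b) |-> (x b, a), whose
   square is x × x; the latter has at least |Delta| cycles, so the swap has at
   least |Delta|/2 >= 3 of them and |Delta| <= 8.  Cycle numbers multiply over
   direct products, which rules out a second 2-cycle and two fixed points of
   sigma.  With exactly one fixed point k, y k must be transitive, and then g has
   at least as many cycles as the |Delta|-th power of the swap, which excludes
   |Delta| = 6 and 7. *)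

From HB Require Import structures.
From mathcomp Require Import all_boot all_order all_algebra all_fingroup.
From mathcomp Require Import zify.
Set Implicit Arguments. Unset Strict Implicit. Unset Printing Implicit Defensive.

Lemma ltn_mul_exp c k : 2 <= c -> 2 <= k -> c.-1 * k.+1 * c < c ^ k.+1.
Proof.
case: c => [|[|d]] // _; elim: k => [|k IHk] // k_gt1.
case: (ltngtP k 1) => [|k_gt1'|->]; first by lia.
  move: (IHk k_gt1'); rewrite [in X in _ -> X]expnS; move: (d.+2 ^ k.+1) => e /=; nia.
by rewrite !expnS expn0 /=; nia.
Qed.

Local Open Scope group_scope.

Lemma leq_card_imset_factor (T U1 U2 : finType) (F1 : T -> U1) (F2 : T -> U2) (A : {set T}) :
  {in A &, forall a b, F1 a = F1 b -> F2 a = F2 b} -> #|F2 @: A| <= #|F1 @: A|.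
Proof.
move=> F12; have [->|[a0 a0A]] := set_0Vmem A; first by rewrite !imset0 cards0.
pose h u := F2 (odflt a0 [pick a in A | F1 a == u]).
suff -> : F2 @: A = h @: (F1 @: A) by apply: leq_imset_card.
rewrite -imset_comp; apply: eq_in_imset => a aA /=; rewrite /h.
case: pickP => [b /andP[bA /eqP/(F12 b a bA aA)->] // | /(_ a)].
by rewrite aA eqxx.
Qed.

Section Cycles.
Variable T : finType.
Implicit Types (g : {perm T}) (a b : T).

Lemma permXS g j a : (g ^+ j.+1) a = g ((g ^+ j) a).
Proof. by rewrite expgSr permM. Qed.

Lemma porbit_step g a : porbit g (g a) = porbit g a.
Proof. by have := porbit_perm g 1 a; rewrite expg1. Qed.

Lemma porbit_invariant (U : Type) g (f : T -> U) a b :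
  (forall c, f (g c) = f c) -> b \in porbit g a -> f b = f a.
Proof.
move=> fg /porbitP[i ->]; elim: i => [|i IHi]; first by rewrite expg0 perm1.
by rewrite permXS fg.
Qed.

Lemma expg_porbit_card g a : (g ^+ #|porbit g a|) a = a.
Proof. by rewrite permX iter_porbit. Qed.

Lemma expg_fix_modn g m j a : (g ^+ m) a = a -> (g ^+ j) a = (g ^+ (j %% m)) a.
Proof.
move=> fix_a; rewrite {1}(divn_eq j m) expgD permM mulnC expgM; congr (_ _).
by elim: (j %/ m) => [|q IHq]; rewrite ?expg0 ?perm1 // expgSr permM IHq fix_a.
Qed.

Lemma porbit_card_dvdn g a j : (g ^+ j) a = a -> #|porbit g a| %| j.
Proof.
rewrite (expg_fix_modn _ (expg_porbit_card g a)) /dvdn => fix_a.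
set n := #|porbit g a| in fix_a *.
have n_gt0 : 0 < n by rewrite lt0n card_porbit_neq0.
have := @nth_uniq _ a (traject g a n) 0 (j %% n).
rewrite size_traject n_gt0 ltn_pmod // => /(_ isT isT (uniq_traject_porbit g a)).
by rewrite !nth_traject ?ltn_pmod // -!permX fix_a expg0 perm1 eqxx eq_sym.
Qed.

Lemma expg_porbit_dvdn g a j : #|porbit g a| %| j -> (g ^+ j) a = a.
Proof.
by move=> /dvdnP[q ->]; rewrite (expg_fix_modn _ (expg_porbit_card g a)) modnMl expg0 perm1.
Qed.

Lemma expg_fix_porbit g j r a :
  (g ^+ j) r = r -> a \in porbit g r -> (g ^+ j) a = a.
Proof. by move=> fix_r /porbitP[e ->]; rewrite -!permM -!expgD addnC expgD permM fix_r. Qed.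

Definition porbit_rep g a := odflt a [pick c in porbit g a].

Lemma porbit_rep_mem g a : porbit_rep g a \in porbit g a.
Proof. by rewrite /porbit_rep; case: pickP => [//|/(_ a)]; rewrite porbit_id. Qed.

Lemma porbit_rep_eq g a b : porbit g a = porbit g b -> porbit_rep g a = porbit_rep g b.
Proof. by rewrite /porbit_rep => ->; case: pickP => [//|/(_ b)]; rewrite porbit_id. Qed.

Lemma leq_card_invariant (U : finType) g (f : T -> U) (A : {set T}) :
  (forall c, f (g c) = f c) -> #|f @: A| <= ncycles g.
Proof.
move=> fg; apply: (@leq_trans #|porbit g @: A|).
  apply: leq_card_imset_factor => a b _ _ eq_ab.
  by rewrite (porbit_invariant fg (_ : b \in porbit g a)) // eq_ab porbit_id.
by apply/subset_leq_card/imsetS/subsetP.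
Qed.

Lemma ncycles_gt1P g : 1 < ncycles g -> exists a b, b \notin porbit g a.
Proof.
case/card_gt1P => _ [_ [/imsetP[a _ ->] /imsetP[b _ ->] neq_ab]].
by exists a, b; rewrite -eq_porbit_mem eq_sym.
Qed.

Lemma porbit_setT g a : ncycles g <= 1 -> porbit g a = [set: T].
Proof.
move=> /card_le1_eqP g1; apply/setP => b; rewrite inE -eq_porbit_mem.
by apply/eqP/g1; apply: imset_f.
Qed.

Lemma expg_card_transitive g : ncycles g <= 1 -> g ^+ #|T| = 1.
Proof.
by move=> g1; apply/permP => a; rewrite perm1 -cardsT -(porbit_setT a g1) expg_porbit_card.
Qed.

Lemma card_le_mul_porbits g (S : {set T}) m : 0 < m ->
  {in S, forall a, (g ^+ m) a = a} -> #|S| <= m * #|porbit g @: S|.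
Proof.
move=> m_gt0 gmS; rewrite -sum1_card (partition_big_imset (porbit g)) /=.
rewrite mulnC -sum_nat_const; apply: leq_sum => _ /imsetP[a aS ->].
apply: (@leq_trans #|[set (g ^+ j) a | j : 'I_m]|); last first.
  by rewrite (leq_trans (leq_imset_card _ _)) ?card_ord.
rewrite sum1_card; apply/subset_leq_card/subsetP => b /andP[_ /eqP ab].
have /porbitP[i ->] : b \in porbit g a by rewrite -ab porbit_id.
apply/imsetP; exists (Ordinal (ltn_pmod i m_gt0)) => //=.
exact: expg_fix_modn (gmS a aS).
Qed.

Lemma porbitsT g : porbits g = porbit g @: [set: T].
Proof. by apply/setP => O; apply/imsetP/imsetP => -[a _ ->]; exists a. Qed.

Lemma ncycles_le_expg g k : ncycles g <= ncycles (g ^+ k).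
Proof.
rewrite /ncycles porbitsT; apply: leq_card_invariant => a.
exact: porbit_perm.
Qed.

Lemma ncycles_expg_le g k : 0 < k -> ncycles (g ^+ k) <= k * ncycles g.
Proof.
move=> k_gt0; pose rep := porbit_rep g.
pose F (p : T * 'I_k) := porbit (g ^+ k) ((g ^+ p.2) (rep p.1)).
rewrite /ncycles; have -> : porbits (g ^+ k) = F @: [set: T * 'I_k].
  apply/setP => O; apply/imsetP/imsetP => -[]; last first.
    by move=> [a j] _ ->; exists ((g ^+ j) (rep a)).
  move=> a _ ->; have /porbitP[j def_a] : a \in porbit g (rep a).
    by rewrite porbit_sym porbit_rep_mem.
  exists (a, Ordinal (ltn_pmod j k_gt0)); rewrite ?inE //= {1}def_a.
  by rewrite {1}(divn_eq j k) addnC expgD permM mulnC expgM porbit_perm.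
apply: (@leq_trans #|(fun p => (porbit g p.1, p.2)) @: [set: T * 'I_k]|).
  apply: leq_card_imset_factor => -[a i] [b j] _ _ [eq_ab <-].
  by rewrite /F /rep (porbit_rep_eq eq_ab).
have -> : (k * ncycles g)%N = #|setX (porbits g) [set: 'I_k]|.
  by rewrite cardsX cardsT card_ord mulnC.
apply/subset_leq_card/subsetP.
by move=> _ /imsetP[[a i] _ ->]; rewrite inE /= in_setT andbT imset_f.
Qed.

End Cycles.

Lemma ncycles_semiconj (T T' : finType) (g : {perm T}) (K : {perm T'}) (f : T -> T') :
  (forall a, f (g a) = K (f a)) -> (forall u, exists a, f a = u) ->
  ncycles K <= ncycles g.
Proof.
move=> fK f_onto; apply: leq_trans (leq_card_invariant (f := porbit K \o f) [set: T] _).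
  apply/subset_leq_card/subsetP => _ /imsetP[u _ ->].
  by have [a <-] := f_onto u; rewrite imset_f.
by move=> a; rewrite /comp fK porbit_step.
Qed.

Section ProdPerm.
Variables (T1 T2 : finType) (g1 : {perm T1}) (g2 : {perm T2}).

Definition prod_perm_fun (p : T1 * T2) := (g1 p.1, g2 p.2).

Lemma prod_perm_fun_inj : injective prod_perm_fun.
Proof. by move=> [a1 b1] [a2 b2] [/perm_inj -> /perm_inj ->]. Qed.

Definition prod_perm := perm prod_perm_fun_inj.

Lemma prod_permE p : prod_perm p = (g1 p.1, g2 p.2).
Proof. by rewrite permE. Qed.

Lemma ncycles_prod_perm : ncycles g1 * ncycles g2 <= ncycles prod_perm.
Proof.
rewrite /ncycles -cardsX porbitsT.
apply: leq_trans (leq_card_invariant (f := fun p => (porbit g1 p.1, porbit g2 p.2)) _ _).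
  apply/subset_leq_card/subsetP => -[_ _] /setXP[/imsetP[a _ ->] /imsetP[b _ ->]].
  by apply/imsetP; exists (a, b).
by move=> [a b]; rewrite prod_permE /= !porbit_step.
Qed.

End ProdPerm.

Lemma prod_permX (T1 T2 : finType) (g1 : {perm T1}) (g2 : {perm T2}) j :
  prod_perm g1 g2 ^+ j = prod_perm (g1 ^+ j) (g2 ^+ j).
Proof.
apply/permP => p; elim: j p => [|j IHj] p.
  by rewrite !expg0 perm1 prod_permE !perm1; case: p.
by rewrite permXS IHj !prod_permE /= !permXS.
Qed.

(* The slice T1 * [set c] meets every cycle, and its first-return map is
   g1 ^+ #|T2|. *)
Lemma ncycles_prod_perm_transitive (T1 T2 : finType) (g1 : {perm T1}) (g2 : {perm T2})
    (c : T2) :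
  ncycles g2 <= 1 -> ncycles (g1 ^+ #|T2|) <= ncycles (prod_perm g1 g2).
Proof.
move=> g2_trans; set g := prod_perm g1 g2.
pose A := [set p : T1 * T2 | p.2 == c].
apply: (@leq_trans #|(fun p => porbit (g1 ^+ #|T2|) p.1) @: A|).
  rewrite /ncycles porbitsT; apply/subset_leq_card/subsetP => _ /imsetP[a _ ->].
  by apply/imsetP; exists (a, c); rewrite ?inE.
apply: (@leq_trans #|porbit g @: A|).
  apply: leq_card_imset_factor => -[a b] [a' b']; rewrite !inE /= => /eqP-> /eqP-> E.
  have /porbitP[j] : (a', c) \in porbit g (a, c) by rewrite E porbit_id.
  rewrite prod_permX prod_permE /= => -[-> /esym fix_c].
  have := porbit_card_dvdn fix_c; rewrite porbit_setT // cardsT => /dvdnP[q ->].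
  by rewrite mulnC expgM porbit_perm.
by rewrite /ncycles porbitsT; apply/subset_leq_card/imsetS/subsetT.
Qed.

Lemma ncycles_gt0 (T : finType) (g : {perm T}) : 0 < #|T| -> 0 < ncycles g.
Proof. by case/card_gt0P => a _; apply/card_gt0P; exists (porbit g a); rewrite imset_f. Qed.

Lemma ncycles_prod_perm_gt1 (T : finType) (g1 g2 : {perm T}) :
  1 < #|T| -> 1 < ncycles (prod_perm g1 g2).
Proof.
move=> T_gt1; have [a _] := card_gt0P (ltnW T_gt1).
have [g2_trans | g2_gt1] := leqP (ncycles g2) 1; last first.
  apply: leq_trans (ncycles_prod_perm g1 g2).
  by rewrite -[2]mul1n leq_mul // ncycles_gt0 // ltnW.
apply: leq_trans (ncycles_prod_perm_transitive g1 a g2_trans).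
have [g1_trans | g1_gt1] := leqP (ncycles g1) 1; last exact: leq_trans (ncycles_le_expg _ _).
have fixT : {in [set: T], forall b, ((g1 ^+ #|T|) ^+ 1) b = b}.
  by move=> b _; rewrite expg1 expg_card_transitive // perm1.
have := card_le_mul_porbits (isT : 0 < 1) fixT.
by rewrite cardsT mul1n -porbitsT => /(leq_trans T_gt1).
Qed.

Section Diagonal.
Variables (T : finType) (x : {perm T}).

(* Since x ^+ j fixes porbit_rep x c only if it fixes all of porbit x c, the
   pairs (porbit_rep x c, c) lie in pairwise distinct cycles of x × x. *)
Let diag_porbits := [set porbit (prod_perm x x) (porbit_rep x c, c) | c : T].

Let card_diag_porbits : #|diag_porbits| = #|T|.
Proof.
rewrite card_imset // => c c' E.
have /porbitP[j] : (porbit_rep x c', c') \in porbit (prod_perm x x) (porbit_rep x c, c).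
  by rewrite E porbit_id.
rewrite prod_permX prod_permE /= => -[rep_c' def_c'].
have c_rep : c \in porbit x (porbit_rep x c) by rewrite porbit_sym porbit_rep_mem.
rewrite def_c'; apply/esym/(expg_fix_porbit _ c_rep); rewrite -rep_c'.
by apply: porbit_rep_eq; rewrite def_c' porbit_perm.
Qed.

Lemma ncycles_prod_diag : #|T| <= ncycles (prod_perm x x).
Proof.
rewrite -card_diag_porbits /ncycles porbitsT.
by apply/subset_leq_card/subsetP => _ /imsetP[c _ ->]; rewrite imset_f.
Qed.

Lemma ncycles_prod_diag_gt a b : b \notin porbit x a -> #|T| + 2 <= ncycles (prod_perm x x).
Proof.
move=> b_a; set P := prod_perm x x.
pose diag (p : T * T) := p.2 \in porbit x p.1.
have diagP p : diag (P p) = diag p.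
  by rewrite /diag prod_permE /= porbit_step porbit_sym porbit_step porbit_sym.
have notin_diag p : ~~ diag p -> porbit P p \notin diag_porbits.
  apply: contra => /imsetP[c _ E].
  have p_c : p \in porbit P (porbit_rep x c, c) by rewrite -E porbit_id.
  by rewrite (porbit_invariant diagP p_c) /diag /= porbit_sym porbit_rep_mem.
have fstP p : porbit x (P p).1 = porbit x p.1 by rewrite prod_permE porbit_step.
have neq_ab : porbit P (a, b) != porbit P (b, a).
  apply: contraNneq b_a => E; have ba : (b, a) \in porbit P (a, b) by rewrite E porbit_id.
  by rewrite -(porbit_invariant fstP ba) porbit_id.
have ab_diag : ~~ diag (a, b) by [].
have ba_diag : ~~ diag (b, a) by rewrite /diag /= porbit_sym.
have : #|porbit P (a, b) |: (porbit P (b, a) |: diag_porbits)| <= ncycles P.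
  rewrite /ncycles porbitsT; apply/subset_leq_card/subsetP => O.
  by rewrite !inE => /or3P[| |/imsetP[c _ ->]] => [/eqP->|/eqP->|]; rewrite imset_f.
rewrite !cardsU1 in_setU1 negb_or neq_ab !notin_diag // card_diag_porbits /=; lia.
Qed.

End Diagonal.

Section TwistedSwap.
Variables (T : finType) (x : {perm T}).

(* Up to coordinates, y sigma on the coordinates of a 2-cycle (i, i') of sigma,
   where x = y i * y i' (see pair_proj_wr). *)
Definition tswap_fun (p : T * T) := (x p.2, p.1).

Lemma tswap_fun_inj : injective tswap_fun.
Proof. by move=> [a1 b1] [a2 b2] [/perm_inj -> ->]. Qed.

Definition tswap := perm tswap_fun_inj.

Lemma tswapE p : tswap p = (x p.2, p.1).
Proof. by rewrite permE. Qed.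

Lemma tswap_sqr : tswap ^+ 2 = prod_perm x x.
Proof. by apply/permP => -[a b]; rewrite expgS expg1 permM !tswapE prod_permE. Qed.

Lemma card_le_ncycles_tswap : #|T| <= 2 * ncycles tswap.
Proof. by rewrite (leq_trans (ncycles_prod_diag x)) // -tswap_sqr ncycles_expg_le. Qed.

Lemma ncycles_tswap_gt a b : b \notin porbit x a -> #|T| + 2 <= 2 * ncycles tswap.
Proof.
move=> b_a; rewrite (leq_trans (ncycles_prod_diag_gt b_a)) //.
by rewrite -tswap_sqr ncycles_expg_le.
Qed.

Lemma ncycles_tswap_expg_card : #|T| \in [:: 6; 7] -> 5 <= ncycles (tswap ^+ #|T|).
Proof.
rewrite !inE => /orP[/eqP T6 | /eqP T7].
  rewrite T6 (_ : 6 = 2 * 3)%N // expgM tswap_sqr.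
  by apply: leq_trans (ncycles_le_expg _ _); rewrite (leq_trans _ (ncycles_prod_diag x)) ?T6.
have [x_trans | /ncycles_gt1P[a [b b_a]]] := leqP (ncycles x) 1; last first.
  have := ncycles_tswap_gt b_a; rewrite T7 => ?.
  by apply: leq_trans (ncycles_le_expg _ _); lia.
(* If x is a 7-cycle then tswap ^+ 7 is an involution. *)
have fix7 : {in [set: T * T], forall p, ((tswap ^+ #|T|) ^+ 2) p = p}.
  move=> [a b] _; rewrite -expgM mulnC expgM tswap_sqr prod_permX prod_permE /=.
  by rewrite (expg_card_transitive x_trans) !perm1.
have := card_le_mul_porbits (isT : 0 < 2) fix7.
rewrite -porbitsT cardsT card_prod T7 /ncycles; set c := #|porbits _| => ?; lia.
Qed.

End TwistedSwap.

Section TwistedShift.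
Variables (D : finType) (x : {perm D}) (L' : nat).
Local Notation L := L'.+1.
Local Notation word := {ffun 'I_L -> D}.

(* Up to coordinates, y sigma on the coordinates of an L-cycle of sigma, where x
   is the product of the y i along the cycle (see block_proj_wr). *)
Definition tshift_fun (u : word) : word :=
  [ffun m : 'I_L => if val m is k.+1 then u (inord k) else x (u ord_max)].

Lemma tshift_fun_inj : injective tshift_fun.
Proof.
move=> u1 u2 E; apply/ffunP => m; case: (ltnP m L') => m_lt.
  have := congr1 (fun u : word => u (inord m.+1)) E; rewrite !ffunE /= inordK //=.
  by rewrite inord_val.
have -> : m = ord_max by apply/val_inj => /=; move: (ltn_ord m); lia.
by have := congr1 (fun u : word => u ord0) E; rewrite !ffunE /= => /perm_inj.
Qed.

Definition tshift := perm tshift_fun_inj.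

Lemma tshiftE u m : tshift u m = if val m is k.+1 then u (inord k) else x (u ord_max).
Proof. by rewrite permE ffunE. Qed.

Lemma tshiftX j u m : j <= L ->
  (tshift ^+ j) u m = if j <= m then u (inord (m - j)) else x (u (inord (m + L - j))).
Proof.
elim: j m => [|j IHj] m j_le; first by rewrite expg0 perm1 subn0 inord_val.
rewrite permXS tshiftE; case: m => [[|k] k_lt] /=.
  rewrite IHj ?(ltnW j_le) //= ifT; last by lia.
  by congr (x (u _)); apply/val_inj; rewrite /= !inordK //; lia.
rewrite IHj ?(ltnW j_le) // inordK ?ltnS; last by lia.
by case: leqP => _; [congr (u _) | congr (x (u _))]; apply/val_inj; rewrite /= !inordK //; lia.
Qed.

Lemma tshiftX_mul q u : (tshift ^+ (L * q)) u = [ffun m => (x ^+ q) (u m)].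
Proof.
elim: q u => [|q IHq] u; apply/ffunP => m; rewrite ffunE.
  by rewrite muln0 !expg0 !perm1.
rewrite mulnS expgD permM IHq ffunE tshiftX // leqNgt ltn_ord addnK inord_val.
by rewrite expgS permM.
Qed.

Lemma card_le_ncycles_tshift q : 0 < q -> x ^+ q = 1 -> #|D| ^ L <= L * q * ncycles tshift.
Proof.
move=> q_gt0 xq; have fixT : {in [set: word], forall u, (tshift ^+ (L * q)) u = u}.
  by move=> u _; apply/ffunP => m; rewrite tshiftX_mul ffunE xq perm1.
have Lq_gt0 : 0 < L * q by rewrite muln_gt0 q_gt0.
by have := card_le_mul_porbits Lq_gt0 fixT; rewrite cardsT card_ffun card_ord -porbitsT.
Qed.

Definition count_in (C : {set D}) (u : word) := \sum_(m < L) (u m \in C).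

Lemma count_in_tshift (C : {set D}) u :
  (forall a, (x a \in C) = (a \in C)) -> count_in C (tshift u) = count_in C u.
Proof.
move=> xC; rewrite /count_in big_ord_recl [RHS]big_ord_recr /= tshiftE /= xC addnC.
congr (_ + _)%N; apply: eq_bigr => i _; rewrite tshiftE /=.
by rewrite add0n; congr (u _ \in C); apply/val_inj; rewrite /= inordK // ltnS ltnW.
Qed.

Definition step_word a b k : word := [ffun m : 'I_L => if val m < k then a else b].

Lemma count_in_step_word (C : {set D}) a b k : a \in C -> b \notin C -> k <= L ->
  count_in C (step_word a b k) = k.
Proof.
move=> aC bC k_le; have -> : count_in C (step_word a b k) = \sum_(0 <= m < L) (m < k).
  rewrite /count_in big_mkord; apply: eq_bigr => m _.
  by rewrite ffunE; case: ifP; rewrite ?aC ?(negbTE bC).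
rewrite (big_cat_nat (n := k)) //=.
rewrite (@eq_big_nat _ _ _ 0 k _ (fun=> 1%N)) => [|m /andP[_ ->]] //.
rewrite (@eq_big_nat _ _ _ k L _ (fun=> 0%N)) => [|m /andP[]].
  by rewrite !sum_nat_const_nat muln1 muln0 subn0 addn0.
by rewrite leqNgt => /negbTE->.
Qed.

(* count_in C separates the words with 0, ..., L - 1 letters in C = porbit x a,
   and the #|C| ^ L words with all letters in C are fixed by tshift ^+ (L * #|C|),
   hence fill at least two more cycles. *)
Lemma ncycles_tshift_proper_orbit a b : 2 <= L' ->
  1 < #|porbit x a| -> b \notin porbit x a -> L.+2 <= ncycles tshift.
Proof.
move=> L'_ge2 a_gt1 b_a; set C := porbit x a; set c := #|C|.
have xC z : (x z \in C) = (z \in C) by rewrite porbit_sym porbit_step porbit_sym.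
have aC : a \in C by apply: porbit_id.
pose S := [set u : word | [forall m, u m \in C]].
have count_S u : u \in S -> count_in C u = L.
  rewrite inE => /forallP uC; rewrite /count_in (eq_bigr (fun=> 1%N)) => [|m _].
    by rewrite sum1_card card_ord.
  by rewrite uC.
have count_step (k : 'I_L) : count_in C (step_word a b k) = k.
  exact: count_in_step_word (ltnW (ltn_ord k)).
pose inC := porbit tshift @: S.
pose steps := [set porbit tshift (step_word a b k) | k : 'I_L].
have invC := porbit_invariant (fun u => count_in_tshift u xC).
have card_steps : #|steps| = L.
  rewrite card_imset ?card_ord // => i j E; apply/val_inj.
  have : step_word a b j \in porbit tshift (step_word a b i) by rewrite E porbit_id.
  by move/invC; rewrite !count_step.
have disj : [disjoint inC & steps].
  apply/pred0P => O /=; apply/negP => /andP[/imsetP[u uS ->] /imsetP[k _ E]].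
  have : step_word a b k \in porbit tshift u by rewrite E porbit_id.
  by move/invC; rewrite count_step count_S // => k_eq; move: (ltn_ord k); rewrite k_eq ltnn.
have card_inC : 1 < #|inC|.
  have fixS : {in S, forall u, (tshift ^+ (L * c)) u = u}.
    rewrite /S => u /[!inE] /forallP uC; apply/ffunP => m; rewrite tshiftX_mul ffunE.
    exact: expg_fix_porbit (expg_porbit_card x a) (uC m).
  have Lc_gt0 : 0 < L * c by rewrite muln_gt0 /= (ltnW a_gt1).
  have := card_le_mul_porbits Lc_gt0 fixS.
  have -> : #|S| = (c ^ L)%N.
    rewrite -[L in (_ ^ L)%N]card_ord -card_ffun_on; apply: eq_card => u.
    by rewrite inE; apply/forallP/ffun_onP.
  rewrite ltnNge; apply: contraL => inC_le1.
  rewrite -ltnNge (leq_ltn_trans (leq_mul (leqnn _) inC_le1)) // muln1.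
  apply: leq_ltn_trans (ltn_mul_exp a_gt1 L'_ge2).
  by rewrite -/C -/c leq_mul2r leq_pmull ?orbT // -ltnS prednK // ltnW.
have : #|inC :|: steps| <= ncycles tshift.
  rewrite /ncycles porbitsT; apply/subset_leq_card/subsetP => O.
  by rewrite inE => /orP[] /imsetP[u _ ->]; rewrite imset_f.
by rewrite cardsU (disjoint_setI0 disj) cards0 subn0 card_steps; lia.
Qed.

Lemma ncycles_tshift : 5 <= #|D| -> 2 <= L' -> 5 <= ncycles tshift.
Proof.
move=> D_ge5 L'_ge2.
have [a /andP[a_gt1 a_lt] | small] := pickP (fun a => 1 < #|porbit x a| < #|D|).
  have [b b_a] : exists b, b \notin porbit x a.
    apply/existsP; rewrite -negb_forall; apply: contraL a_lt => /forallP a_all.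
    by rewrite -leqNgt -cardsT subset_leq_card //; apply/subsetP => b _; apply: a_all.
  by apply: leq_trans (ncycles_tshift_proper_orbit L'_ge2 a_gt1 b_a); lia.
(* Otherwise every orbit of x is a point or all of D. *)
have x_card : x ^+ #|D| = 1.
  apply/permP => a; rewrite perm1; apply: expg_porbit_dvdn.
  have a_le : #|porbit x a| <= #|D| by rewrite -cardsT subset_leq_card ?subsetT.
  have [a_gt1 | a_le1] := ltnP 1 #|porbit x a|.
    move: (small a); rewrite a_gt1 /= => /negbT; rewrite -leqNgt => a_ge.
    by rewrite (@anti_leq #|porbit x a| #|D|) ?a_le.
  by move: a_le1 (card_porbit_neq0 x a); case: #|_| => [|[]].
have := card_le_ncycles_tshift (ltn_trans (isT : 0 < 4) D_ge5) x_card.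
have := ltn_mul_exp (ltnW (ltnW (ltnW D_ge5))) L'_ge2.
move: (#|D| ^ L)%N (ncycles tshift) D_ge5; set n := #|D| => e k n_ge5 lt_e e_le.
suff : n.-1 < k by lia.
rewrite -(ltn_pmul2r (_ : 0 < L * n)); last by rewrite muln_gt0 /=; lia.
by rewrite mulnA [(k * _)%N]mulnC (leq_trans lt_e).
Qed.

End TwistedShift.

Lemma wr_permE (D : finType) l (y : 'I_l -> {perm D}) (s : {perm 'I_l}) w j :
  wr_perm y s w j = y (s^-1 j) (w (s^-1 j)).
Proof. by rewrite permE ffunE. Qed.

Section CycleBlock.
Variables (D : finType) (l : nat) (y : 'I_l -> {perm D}) (s : {perm 'I_l}).
Variables (i0 : 'I_l) (L' : nat).
Hypothesis card_i0 : #|porbit s i0| = L'.+1.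
Local Notation L := L'.+1.

Let cycle_index m := (s ^+ m) i0.
Let cycle_prod m := \prod_(k < m) y (cycle_index k).

Definition block_proj (w : {ffun 'I_l -> D}) : {ffun 'I_L -> D} :=
  [ffun m : 'I_L => (cycle_prod m)^-1 (w (cycle_index m))].

Lemma block_proj_wr w : block_proj (wr_perm y s w) = tshift (cycle_prod L) L' (block_proj w).
Proof.
apply/ffunP => m; rewrite tshiftE !ffunE wr_permE.
have cycle_indexS k : cycle_index k.+1 = s (cycle_index k) by rewrite /cycle_index permXS.
have cycle_prodS k : cycle_prod k.+1 = cycle_prod k * y (cycle_index k).
  by rewrite /cycle_prod big_ord_recr.
case: m => [[|k] k_lt] /=.
  have s_last : s (cycle_index L') = i0.
    by rewrite -cycle_indexS /cycle_index -card_i0 expg_porbit_card.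
  have cycle_index0 : cycle_index 0 = i0 by rewrite /cycle_index expg0 perm1.
  have cycle_prod0 : cycle_prod 0 = 1 by rewrite /cycle_prod big_ord0.
  by rewrite cycle_prod0 invg1 perm1 cycle_prodS permM permKV cycle_index0 -s_last permK.
by rewrite cycle_indexS permK cycle_prodS invMg permM permK ffunE inordK // ltnW.
Qed.

Lemma block_proj_onto u : exists w, block_proj w = u.
Proof.
have cycle_index_inj : injective (fun m : 'I_L => cycle_index m).
  move=> m1 m2 E; apply/val_inj/eqP.
  have := @nth_uniq _ i0 (traject s i0 L) m1 m2; rewrite size_traject !ltn_ord.
  have := uniq_traject_porbit s i0; rewrite card_i0 => U /(_ isT isT U) <-.
  by rewrite !nth_traject ?card_i0 // -!permX -/(cycle_index m1) E.
exists [ffun j => if [pick m : 'I_L | cycle_index m == j] is Some m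
                  then cycle_prod m (u m) else u ord0].
apply/ffunP => m; rewrite !ffunE; case: pickP => [m' /eqP/cycle_index_inj -> | /(_ m)].
  by rewrite permK.
by rewrite eqxx.
Qed.

End CycleBlock.

Lemma ncycles_wr_long_cycle (D : finType) l (y : 'I_l -> {perm D}) (s : {perm 'I_l}) i0 :
  5 <= #|D| -> 3 <= #|porbit s i0| -> 5 <= ncycles (wr_perm y s).
Proof.
move=> D_ge5; case E: #|porbit s i0| => [//|L'] L_ge3.
apply: leq_trans (ncycles_tshift _ D_ge5 (_ : 2 <= L')) _ => //.
exact: ncycles_semiconj (block_proj_wr y E) (block_proj_onto y E).
Qed.

Section WreathProduct.
Variables (D : finType) (l : nat) (y : 'I_l -> {perm D}) (s : {perm 'I_l}).
Local Notation g := (wr_perm y s).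
Implicit Types (i j k : 'I_l) (w : {ffun 'I_l -> D}).

Lemma wr_perm_fix w k : s k = k -> g w k = y k (w k).
Proof. by move=> sk; rewrite wr_permE -{1 2}sk permK. Qed.

Definition pair_proj i w : D * D := (w i, (y i)^-1 (w (s i))).

Lemma pair_proj_wr i w : s (s i) = i ->
  pair_proj i (g w) = tswap (y i * y (s i)) (pair_proj i w).
Proof.
move=> ssi; rewrite /pair_proj tswapE /= !wr_permE permK.
have -> : s^-1 i = s i by rewrite -{1}ssi permK.
by rewrite permK permM permKV.
Qed.

Lemma pair_proj_onto i p w0 : s i != i ->
  exists2 w, pair_proj i w = p & forall j, j != i -> j != s i -> w j = w0 j.
Proof.
move=> si; exists [ffun j => if j == i then p.1 else if j == s i then y i p.2 else w0 j].
  by rewrite /pair_proj !ffunE eqxx (negbTE si) eqxx permK; case: p.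
by move=> j /negbTE ji /negbTE jsi; rewrite ffunE ji jsi.
Qed.

Lemma ncycles_tswap_le_wr i : s (s i) = i -> s i != i ->
  ncycles (tswap (y i * y (s i))) <= ncycles g.
Proof.
move=> ssi si; apply: ncycles_semiconj (fun w => pair_proj_wr w ssi) _ => p.
by have [w <- _] := pair_proj_onto p [ffun=> p.1] si; exists w.
Qed.

Lemma fixed_neq_moved i k : s i != i -> s k = k -> (k != i) && (k != s i).
Proof.
move=> si sk; apply/andP; split; first by apply: contraNneq si => <-; rewrite sk.
by apply: contraNneq si => ksi; apply/eqP/(@perm_inj _ s); rewrite -ksi.
Qed.

Lemma ncycles_two_pairs_le_wr i j :
  s (s i) = i -> s (s j) = j -> s i != i -> s j != j -> j != i -> j != s i ->
  ncycles (prod_perm (tswap (y i * y (s i))) (tswap (y j * y (s j)))) <= ncycles g.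
Proof.
move=> ssi ssj si sj ji jsi.
have sji : s j != i by apply: contraNneq jsi => <-; rewrite ssj.
have sjsi : s j != s i by rewrite (inj_eq perm_inj).
apply: (@ncycles_semiconj _ _ _ _ (fun w => (pair_proj i w, pair_proj j w))) => [w|[p q]].
  by rewrite prod_permE /= !pair_proj_wr.
have [w0 w0q _] := pair_proj_onto q [ffun=> q.1] sj.
have [w wp ww0] := pair_proj_onto p w0 si.
by exists w; rewrite wp -w0q /pair_proj !ww0.
Qed.

Lemma ncycles_pair_fixed_le_wr i k : s (s i) = i -> s i != i -> s k = k ->
  ncycles (prod_perm (tswap (y i * y (s i))) (y k)) <= ncycles g.
Proof.
move=> ssi si sk; have /andP[ki ksi] := fixed_neq_moved si sk.
apply: (@ncycles_semiconj _ _ _ _ (fun w => (pair_proj i w, w k))) => [w|[p c]].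
  by rewrite prod_permE /= pair_proj_wr // wr_perm_fix.
have [w wp ww0] := pair_proj_onto p [ffun=> c] si.
by exists w; rewrite wp ww0 // ffunE.
Qed.

Lemma ncycles_pair_fixed2_le_wr i k k' :
  s (s i) = i -> s i != i -> s k = k -> s k' = k' -> k' != k ->
  ncycles (prod_perm (tswap (y i * y (s i))) (prod_perm (y k) (y k'))) <= ncycles g.
Proof.
move=> ssi si sk sk' k'k.
have /andP[ki ksi] := fixed_neq_moved si sk.
have /andP[k'i k'si] := fixed_neq_moved si sk'.
apply: (@ncycles_semiconj _ _ _ _ (fun w => (pair_proj i w, (w k, w k')))) => [w|[p [c c']]].
  by rewrite !prod_permE /= pair_proj_wr // !wr_perm_fix.
have [w wp ww0] := pair_proj_onto p [ffun j => if j == k then c else c'] si.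
by exists w; rewrite wp !ww0 // !ffunE eqxx (negbTE k'k).
Qed.

Hypotheses (D_ge5 : 5 <= #|D|) (g_le4 : ncycles g <= 4).

Lemma wr_involutive j : s (s j) = j.
Proof.
have card_le2 : #|porbit s j| <= 2.
  by rewrite leqNgt; apply: contraL g_le4 => /(ncycles_wr_long_cycle y D_ge5); lia.
move: (expg_porbit_card s j) (card_porbit_neq0 s j) card_le2.
case: #|_| => [|[|[|]]] // => [|E _ _]; first by rewrite expg1 => E _ _; rewrite !E.
by rewrite -{2}E expgS expg1 permM.
Qed.

Let ncycles_tswap_ge3 (x : {perm D}) : 3 <= ncycles (tswap x).
Proof. by have := card_le_ncycles_tswap x; lia. Qed.

Lemma wr_transposition i : s i != i -> s = tperm i (s i).
Proof.
move=> si; apply/permP => j; case: tpermP => [->|->|ji jsi]; rewrite ?wr_involutive //.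
apply/eqP; apply: contraT => sj.
have := ncycles_two_pairs_le_wr (wr_involutive i) (wr_involutive j) si sj
  (introN eqP ji) (introN eqP jsi).
move/(leq_trans (ncycles_prod_perm _ _))/leq_trans/(_ g_le4).
have := ncycles_tswap_ge3 (y i * y (s i)); have := ncycles_tswap_ge3 (y j * y (s j)); nia.
Qed.

Lemma wr_fixed_transitive i k : s i != i -> s k = k -> ncycles (y k) <= 1.
Proof.
move=> si sk; have := ncycles_pair_fixed_le_wr (wr_involutive i) si sk.
move/(leq_trans (ncycles_prod_perm _ _))/leq_trans/(_ g_le4).
have := ncycles_tswap_ge3 (y i * y (s i)); nia.
Qed.

Lemma wr_fixed_unique i k k' : s i != i -> s k = k -> s k' = k' -> k' = k.
Proof.
move=> si sk sk'; apply/eqP; apply: contraT => k'k.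
have := ncycles_pair_fixed2_le_wr (wr_involutive i) si sk sk' k'k.
move/(leq_trans (ncycles_prod_perm _ _))/leq_trans/(_ g_le4).
have := ncycles_prod_perm_gt1 (y k) (y k') (ltn_trans (isT : 1 < 4) D_ge5).
have := ncycles_tswap_ge3 (y i * y (s i)); nia.
Qed.

Lemma wr_fixed_card i k : s i != i -> s k = k -> #|D| \notin [:: 6; 7].
Proof.
move=> si sk; have [c _] := card_gt0P (ltn_trans (isT : 0 < 4) D_ge5).
apply: contraTN g_le4 => /(ncycles_tswap_expg_card (y i * y (s i))); rewrite -ltnNge.
move/leq_trans; apply; apply: leq_trans (ncycles_pair_fixed_le_wr (wr_involutive i) si sk).
exact: ncycles_prod_perm_transitive c (wr_fixed_transitive si sk).
Qed.

End WreathProduct.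

Lemma wr_ncycles_le4 (D : finType) l (y : 'I_l -> {perm D}) (s : {perm 'I_l}) :
  5 <= #|D| -> s != 1 -> ncycles (wr_perm y s) <= 4 -> prop5p2_concl #|D| s.
Proof.
move=> D_ge5 s1 g_le4.
have [i si] : exists i, s i != i.
  apply/existsP; rewrite -negb_forall; apply: contra s1 => /forallP s_id.
  by apply/eqP/permP => j; rewrite perm1; apply/eqP.
have ssi := wr_involutive D_ge5 g_le4 i.
have s_tperm := wr_transposition D_ge5 g_le4 si.
split; first by exists i, (s i); rewrite eq_sym si.
have D_le8 : #|D| <= 8.
  have := leq_trans (ncycles_tswap_le_wr y ssi si) g_le4.
  by have := card_le_ncycles_tswap (y i * y (s i)); lia.
have fix_other k : k != i -> k != s i -> s k = k.
  by move=> ki ksi; rewrite s_tperm tpermD // eq_sym.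
have card_l (A : {set 'I_l}) :
    (forall k, k != i -> k != s i -> k \in A) -> l = #|[set i; s i] :|: A|.
  move=> A_other; transitivity #|[set: 'I_l]|; first by rewrite cardsT card_ord.
  apply: eq_card => j.
  rewrite !inE; case: (j =P i) => //= /eqP ji.
  by case: (j =P s i) => //= /eqP jsi; rewrite A_other.
have [k /andP[ki ksi] | no_other] := pickP (fun k => (k != i) && (k != s i)).
  right; have sk := fix_other k ki ksi; split.
    by have := wr_fixed_card D_ge5 g_le4 si sk; rewrite !inE; lia.
  rewrite (card_l [set k]) => [|j ji jsi].
    by rewrite -setUA cardsU1 cards2 !inE eq_sym (negbTE si) eq_sym (negbTE ki) eq_sym ksi.
  by rewrite inE (wr_fixed_unique D_ge5 g_le4 si sk (fix_other j ji jsi)).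
left; split; first by rewrite !inE; lia.
rewrite (card_l set0) => [|j ji jsi]; first by rewrite setU0 cards2 eq_sym si.
by move: (no_other j); rewrite ji jsi.
Qed.

Local Close Scope group_scope.

Lemma leq_bin n k : 0 < k < n -> n <= 'C(n, k).
Proof.
elim: n k => [|n IHn] [|k] // /andP[_]; rewrite ltnS => k_lt.
case: k k_lt => [|k] k_lt; first by rewrite bin1.
rewrite binS; have := bin_gt0 n k.+2; have := IHn k.+1; rewrite k_lt /=; lia.
Qed.

Lemma card_ksub m k : 5 <= m -> 1 <= k -> k.*2 < m -> 5 <= #|{: ksub m k}|.
Proof.
move=> m_ge5 k_ge1 km; rewrite card_sig.
have -> : #|[pred A : {set 'I_m} | #|A| == k]| = #|[set A : {set 'I_m} | #|A| == k]|.
  by apply: eq_card => A; rewrite inE.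
by rewrite card_draws card_ord (leq_trans m_ge5) // leq_bin //; lia.
Qed.

Section ProjectivePoints.
Variables (F : finFieldType) (d' : nat).
Local Open Scope ring_scope.
Import GRing.Theory.
Local Notation d := d'.+2.

Let e0 : 'rV[F]_d := delta_mx 0 0.
Let e1 : 'rV[F]_d := delta_mx 0 (lift 0 0).

(* Representatives of the points <e0 + a e1> and <e1> of the line through e0, e1. *)
Let affine_vec (o : option F) : 'rV[F]_d := if o is Some a then e0 + a *: e1 else e1.

Let affine_vec0 o : affine_vec o 0 0 = if o is Some _ then 1 else 0.
Proof. by case: o => [a|]; rewrite /= ?mxE /= ?mulr1n ?mulr0n ?mulr0 ?addr0. Qed.

Let affine_vec1 o : affine_vec o 0 (lift 0 0) = if o is Some a then a else 1.
Proof. by case: o => [a|]; rewrite /= ?mxE /= ?mulr1n ?mulr0n ?mulr1 ?add0r. Qed.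

Let affine_point (o : option F) : proj_points F d.
Proof.
exists [set c *: affine_vec o | c : F]; apply/existsP; exists (affine_vec o).
rewrite eqxx andbT; apply/eqP => E; case: o E => [a|] E.
  by move: (affine_vec0 (Some a)); rewrite E mxE => /eqP; rewrite eq_sym oner_eq0.
by move: (affine_vec1 None); rewrite E mxE => /eqP; rewrite eq_sym oner_eq0.
Defined.

Let affine_point_inj : injective affine_point.
Proof.
move=> o1 o2 /(congr1 val) /= E.
have /imsetP[c _ Ec] : affine_vec o2 \in [set c *: affine_vec o1 | c : F].
  by rewrite E; apply/imsetP; exists 1; rewrite ?scale1r.
move: (affine_vec0 o2) (affine_vec1 o2); rewrite Ec !mxE affine_vec0 affine_vec1.
case: o1 o2 {E Ec} => [a|] [b|] //= E0 E1.
- by rewrite mulr1 in E0; rewrite -E1 E0 mul1r.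
- by move: E1; rewrite mulr1 in E0; rewrite E0 mul0r => /eqP; rewrite eq_sym oner_eq0.
- by move: E0; rewrite mulr0 => /eqP; rewrite eq_sym oner_eq0.
Qed.

Lemma card_proj_points : (4 <= #|F|)%N -> (5 <= #|{: proj_points F d}|)%N.
Proof.
move=> F_ge4; rewrite (leq_trans _ (leq_card _ affine_point_inj)) //.
by rewrite card_option.
Qed.

End ProjectivePoints.

Theorem proposition5p2 :
  (forall (m k l : nat) (y : 'I_l -> {perm ksub m k}) (s : {perm 'I_l}),
     (5 <= m)%N -> (1 <= k)%N -> (k.*2 < m)%N -> (1 <= l)%N ->
     (forall i, in_Sym_ksub (y i)) -> s != 1%g ->
     (ncycles (wr_perm y s) <= 4)%N ->
     prop5p2_concl #|{: ksub m k}| s)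
  /\
  (forall (F : finFieldType) (d l : nat) (y : 'I_l -> {perm proj_points F d})
          (s : {perm 'I_l}),
     (2 <= d)%N -> (4 <= #|F|)%N -> (1 <= l)%N ->
     (forall i, in_PGammaL (y i)) -> s != 1%g ->
     (ncycles (wr_perm y s) <= 4)%N ->
     prop5p2_concl #|{: proj_points F d}| s).
Proof.
split=> [m k l y s m_ge5 k_ge1 km _ _ | F [|[|d']] l y s // _ F_ge4 _ _]; apply: wr_ncycles_le4.
  exact: card_ksub.
exact: card_proj_points.
Qed.
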